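(* Let $\mathbf{P_0},\mathbf{P_1}$ be $n\times n$ transition probability matrices of irreducible and aperiodic Markov chains on $n$ states, let $\mathbf{P_t}=(1-t)\mathbf{P_0}+t\mathbf{P_1}$ for $t\in[0,1]$, and let $\pi_1$ be the stationary distribution of $\mathbf{P_1}$. Then for every $\epsilon>0$, $$t_{ad}(\mathbf{P_0},\mathbf{P_1},\epsilon)\le\frac{2\,t_{mix}^2(\mathbf{P_1},\epsilon/2)}{\epsilon}.$$
   Context: Distributions are row vectors; $\|\mu-\nu\|_{TV}=\frac12\|\mu-\nu\|_1$. For an irreducible aperiodic transition matrix $\mathbf{P}$ with stationary distribution $\pi$, $t_{mix}(\mathbf{P},\epsilon)=\inf\{T\in\mathbb{N}: \|\nu\mathbf{P}^T-\pi\|_{TV}\le\epsilon \text{ for all distributions }\nu\}$. The adiabatic time is $$t_{ad}(\mathbf{P_0},\mathbf{P_1},\epsilon)=\inf\{T^*\in\mathbb{N}: \max_\nu\|\nu\mathbf{P_0}\mathbf{P_{1/T}}\mathbf{P_{2/T}}\cdots\mathbf{P_1}-\pi_1\|_{TV}\le\epsilon \text{ for all } T\in\mathbb{N},\,T\ge T^*\},$$ the maximum being over all probability distributions $\nu$ and the product being $\mathbf{P_{0/T}}\mathbf{P_{1/T}}\cdots\mathbf{P_{T/T}}$. *)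

From HB Require Import structures.
From mathcomp Require Import all_boot all_order all_algebra.
From mathcomp Require Import all_classical all_reals ereal.
Set Implicit Arguments. Unset Strict Implicit. Unset Printing Implicit Defensive.
Import Order.TTheory GRing.Theory Num.Theory.
Local Open Scope ring_scope.

Section MC.
Variables (R : realType) (n : nat).

Definition is_distr (mu : 'rV[R]_n) : Prop :=
  (forall j, 0 <= mu 0 j) /\ \sum_j mu 0 j = 1.

Definition stochastic (P : 'M[R]_n) : Prop :=
  (forall i j, 0 <= P i j) /\ (forall i, \sum_j P i j = 1).

Definition irreducible (P : 'M[R]_n) : Prop :=
  forall i j, exists k : nat, 0 < (P ^+ k) i j.

(* aperiodic: for each state i, gcd {k >= 1 : P^k(i,i) > 0} = 1 *)
Definition aperiodic (P : 'M[R]_n) : Prop :=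
  forall (i : 'I_n) (d : nat),
    (forall k : nat, (0 < k)%N -> 0 < (P ^+ k) i i -> (d %| k)%N) -> d = 1%N.

Definition stationary (P : 'M[R]_n) (pi : 'rV[R]_n) : Prop :=
  is_distr pi /\ pi *m P = pi.

Definition tv (mu nu : 'rV[R]_n) : R := 2^-1 * \sum_j `|mu 0 j - nu 0 j|.

(* infimum of a set of naturals in the extended reals (+oo if empty) *)
Definition nat_inf (S : nat -> Prop) : \bar R :=
  ereal_inf [set ((k%:R : R)%:E) | k in S].

Definition tmix (P : 'M[R]_n) (pi : 'rV[R]_n) (eps : R) : \bar R :=
  nat_inf (fun T => forall nu, is_distr nu -> tv (nu *m P ^+ T) pi <= eps).

Definition interp (P0 P1 : 'M[R]_n) (t : R) : 'M[R]_n := (1 - t) *: P0 + t *: P1.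

(* P_{0/T} P_{1/T} ... P_{T/T}, product taken left to right *)
Definition adiab_prod (P0 P1 : 'M[R]_n) (T : nat) : 'M[R]_n :=
  \big[mulmx/1%:M]_(i < T.+1) interp P0 P1 (i%:R / T%:R).

Definition tad (P0 P1 : 'M[R]_n) (pi1 : 'rV[R]_n) (eps : R) : \bar R :=
  nat_inf (fun Tstar => forall T : nat, (0 < T)%N -> (Tstar <= T)%N ->
     forall nu, is_distr nu -> tv (nu *m adiab_prod P0 P1 T) pi1 <= eps).

End MC.

From HB Require Import structures.
From mathcomp Require Import all_boot all_order all_algebra.
From mathcomp Require Import all_classical all_reals ereal.
From mathcomp Require Import ring lra zify.
Import Order.TTheory GRing.Theory Num.Theory.
Local Open Scope ring_scope.
Set Implicit Arguments. Unset Strict Implicit.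

(* Split the adiabatic product P_{0/T} ... P_{T/T} as A W, where W collects the
   last k = t_mix(P1, eps/2) factors.  Every factor P_{i/T} of W is within
   (1 - i/T) (P0 - P1) <= (k - 1)/T (P0 - P1) of P1, so telescoping gives
   ||mu W - mu P1^k||_TV <= k (k - 1) / T for every distribution mu, while
   ||mu A P1^k - pi1||_TV <= eps/2 by the choice of k.  Once T + 1 > 2 k^2 / eps
   the sum is at most eps. *)

Section StochasticMatrices.
Variables (R : realType) (n : nat).
Implicit Types (P A B : 'M[R]_n) (mu u v : 'rV[R]_n).

Definition l1norm u : R := \sum_j `|u 0 j|.

Lemma l1normD u v : l1norm (u + v) <= l1norm u + l1norm v.
Proof. by rewrite /l1norm -big_split; apply: ler_sum => j _; rewrite mxE ler_normD. Qed.

Lemma l1normN u : l1norm (- u) = l1norm u.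
Proof. by apply: eq_bigr => j _; rewrite mxE normrN. Qed.

Lemma l1normB u v : l1norm (u - v) <= l1norm u + l1norm v.
Proof. by rewrite -(l1normN v) l1normD. Qed.

Lemma l1normZ a u : l1norm (a *: u) = `|a| * l1norm u.
Proof. by rewrite /l1norm mulr_sumr; apply: eq_bigr => j _; rewrite mxE normrM. Qed.

Lemma l1norm_distr mu : is_distr mu -> l1norm mu = 1.
Proof. by move=> [mu_ge0 <-]; apply: eq_bigr => j _; rewrite ger0_norm. Qed.

Lemma tv_l1norm u v : tv u v = 2^-1 * l1norm (u - v).
Proof. by congr (_ * _); apply: eq_bigr => j _; rewrite !mxE. Qed.

Lemma tv_triangle u v mu : tv u mu <= tv v mu + 2^-1 * l1norm (u - v).
Proof.
rewrite !tv_l1norm -mulrDr ler_pM2l ?invr_gt0 ?ltr0n //.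
have -> : u - mu = (v - mu) + (u - v) by rewrite [RHS]addrC addrA subrK.
exact: l1normD.
Qed.

Lemma tv_distr_le1 u v : is_distr u -> is_distr v -> tv u v <= 1.
Proof.
move=> u_distr v_distr; rewrite tv_l1norm.
apply: le_trans (_ : 2^-1 * (l1norm u + l1norm v) <= 1).
  by rewrite ler_pM2l ?invr_gt0 ?ltr0n // l1normB.
by rewrite !l1norm_distr // mulVf.
Qed.

Lemma stochastic1 : stochastic (1%:M : 'M[R]_n).
Proof.
split=> [i j|i]; first by rewrite mxE; case: (i == j).
rewrite (bigD1 i) //= mxE eqxx big1 ?addr0 // => j /negPf ji.
by rewrite mxE eq_sym ji.
Qed.

Lemma stochastic_mul A B : stochastic A -> stochastic B -> stochastic (A *m B).
Proof.
move=> [A_ge0 A_sum] [B_ge0 B_sum]; split=> [i j|i].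
  by rewrite mxE; apply: sumr_ge0 => k _; apply: mulr_ge0.
under eq_bigr do rewrite mxE.
by rewrite exchange_big /=; under eq_bigr do rewrite -mulr_sumr B_sum mulr1.
Qed.

Lemma mulmx_big_cat (I : Type) (r1 r2 : seq I) (F : I -> 'M[R]_n) :
  \big[mulmx/1%:M]_(i <- r1 ++ r2) F i =
  \big[mulmx/1%:M]_(i <- r1) F i *m \big[mulmx/1%:M]_(i <- r2) F i.
Proof.
elim: r1 => [|i r1 IHr1]; first by rewrite big_nil mul1mx.
by rewrite cat_cons !big_cons IHr1 mulmxA.
Qed.

Lemma stochastic_prod (I : eqType) (r : seq I) (F : I -> 'M[R]_n) :
  (forall i, i \in r -> stochastic (F i)) ->
  stochastic (\big[mulmx/1%:M]_(i <- r) F i).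
Proof.
move=> F_stoch; rewrite big_seq; apply: (big_ind (@stochastic R n)) => //.
  exact: stochastic1.
exact: stochastic_mul.
Qed.

Lemma stochastic_interp P0 P1 s : stochastic P0 -> stochastic P1 ->
  0 <= s <= 1 -> stochastic (interp P0 P1 s).
Proof.
move=> [P0_ge0 P0_sum] [P1_ge0 P1_sum] /andP[s_ge0 s_le1]; split=> [i j|i].
  by rewrite !mxE addr_ge0 // mulr_ge0 // subr_ge0.
under eq_bigr do rewrite !mxE.
by rewrite big_split /= -!mulr_sumr P0_sum P1_sum !mulr1 subrK.
Qed.

Lemma distr_mulmx P mu : stochastic P -> is_distr mu -> is_distr (mu *m P).
Proof.
move=> [P_ge0 P_sum] [mu_ge0 mu_sum]; split=> [j|].
  by rewrite mxE; apply: sumr_ge0 => i _; apply: mulr_ge0.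
under eq_bigr do rewrite mxE.
by rewrite exchange_big /=; under eq_bigr do rewrite -mulr_sumr P_sum mulr1.
Qed.

Lemma l1norm_mulmx_le P u : stochastic P -> l1norm (u *m P) <= l1norm u.
Proof.
move=> [P_ge0 P_sum]; rewrite /l1norm; under eq_bigr do rewrite mxE.
apply: (le_trans (y := \sum_j \sum_i `|u 0 i| * P i j)).
  apply: ler_sum => j _; apply: le_trans (ler_norm_sum _ _ _) _.
  by apply: ler_sum => i _; rewrite normrM (ger0_norm (P_ge0 _ _)).
by rewrite exchange_big /=; apply: ler_sum => i _; rewrite -mulr_sumr P_sum mulr1.
Qed.

Lemma l1norm_mulmxX_le P u m : stochastic P -> l1norm (u *m P ^+ m) <= l1norm u.
Proof.
move=> P_stoch; elim: m u => [|m IHm] u; first by rewrite expr0 mulmx1.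
by rewrite exprSr -mulmxE mulmxA (le_trans (l1norm_mulmx_le _ P_stoch)).
Qed.

Lemma l1norm_prod_sub_exp (I : eqType) (r : seq I) (F : I -> 'M[R]_n) P d :
  stochastic P ->
  (forall i, i \in r -> stochastic (F i)) ->
  (forall i mu, i \in r -> is_distr mu -> l1norm (mu *m F i - mu *m P) <= d) ->
  forall mu, is_distr mu ->
  l1norm (mu *m \big[mulmx/1%:M]_(i <- r) F i - mu *m P ^+ size r) <= (size r)%:R * d.
Proof.
move=> P_stoch; elim: r => [|i r IHr] F_stoch F_close mu mu_distr.
  by rewrite big_nil expr0 mulmx1 subrr mul0r /l1norm big1 // => j _; rewrite mxE normr0.
have i_r : i \in i :: r by rewrite mem_head.
have sub_r j : j \in r -> j \in i :: r by rewrite inE orbC => ->.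
rewrite big_cons /= exprS -mulmxE !mulmxA.
set nu := mu *m F i.
have -> : nu *m \big[mulmx/1%:M]_(j <- r) F j - mu *m P *m P ^+ size r =
    (nu *m \big[mulmx/1%:M]_(j <- r) F j - nu *m P ^+ size r)
  + (nu - mu *m P) *m P ^+ size r by rewrite mulmxBl addrA subrK.
rewrite -nat1r mulrDl mul1r [d + _]addrC; apply: le_trans (l1normD _ _) _; apply: lerD.
  apply: IHr => [j /sub_r|j nu' /sub_r|]; [exact: F_stoch | exact: F_close |].
  exact/distr_mulmx/mu_distr/F_stoch.
by apply: le_trans (l1norm_mulmxX_le _ _ P_stoch) _; apply: F_close.
Qed.

Lemma l1norm_interp_sub_le P0 P1 s mu :
  stochastic P0 -> stochastic P1 -> s <= 1 -> is_distr mu ->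
  l1norm (mu *m interp P0 P1 s - mu *m P1) <= 2 * (1 - s).
Proof.
move=> P0_stoch P1_stoch s_le1 mu_distr.
have -> : mu *m interp P0 P1 s - mu *m P1 = (1 - s) *: (mu *m P0 - mu *m P1).
  rewrite /interp mulmxDr -!scalemxAr.
  by apply/rowP => j; rewrite !mxE; ring.
rewrite l1normZ ger0_norm ?subr_ge0 // mulrC ler_wpM2r ?subr_ge0 //.
apply: le_trans (l1normB _ _) _.
by rewrite !l1norm_distr //; apply: distr_mulmx.
Qed.

End StochasticMatrices.

Section AdiabaticProduct.
Variables (R : realType) (n : nat) (P0 P1 : 'M[R]_n).
Hypotheses (P0_stoch : stochastic P0) (P1_stoch : stochastic P1).

Lemma stochastic_interp_grid T i : (i <= T)%N -> stochastic (interp P0 P1 (i%:R / T%:R)).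
Proof.
move=> le_iT; apply: stochastic_interp => //; rewrite divr_ge0 //=.
have [->|T_gt0] := posnP T; first by rewrite invr0 mulr0.
by rewrite ler_pdivrMr ?ltr0n // mul1r ler_nat.
Qed.

Lemma stochastic_adiab_prod T : stochastic (adiab_prod P0 P1 T).
Proof. by apply: stochastic_prod => i _; apply: stochastic_interp_grid; rewrite -ltnS. Qed.

Lemma interp_grid_sub_le T k i mu :
  (0 < T)%N -> (i <= T)%N -> (T.+1 <= i + k)%N -> is_distr mu ->
  l1norm (mu *m interp P0 P1 (i%:R / T%:R) - mu *m P1) <= 2 * ((k%:R - 1) / T%:R).
Proof.
move=> T_gt0 le_iT le_Tik mu_distr.
have i_le1 : i%:R / T%:R <= 1 :> R by rewrite ler_pdivrMr ?ltr0n // mul1r ler_nat.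
apply: le_trans (l1norm_interp_sub_le P0_stoch P1_stoch i_le1 mu_distr) _.
have T_neq0 : T%:R != 0 :> R by rewrite pnatr_eq0 -lt0n.
have -> : 1 - i%:R / T%:R = (T%:R - i%:R) / T%:R :> R by field.
rewrite ler_pM2l // ler_pM2r ?invr_gt0 ?ltr0n //.
by move: le_Tik; rewrite -(ler_nat R) natrD -natr1; lra.
Qed.

Lemma tv_adiab_prod_le (pi : 'rV[R]_n) (delta : R) (k T : nat) mu :
  (forall nu, is_distr nu -> tv (nu *m P1 ^+ k) pi <= delta) ->
  (0 < T)%N -> (k <= T.+1)%N -> is_distr mu ->
  tv (mu *m adiab_prod P0 P1 T) pi <= delta + k%:R * (k%:R - 1) / T%:R.
Proof.
move=> mixing T_gt0 le_kT mu_distr.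
set G := fun i : nat => interp P0 P1 (i%:R / T%:R).
rewrite /adiab_prod -(big_mkord xpredT G) /index_iota subn0 -{1}(subnK le_kT).
rewrite iotaD add0n mulmx_big_cat mulmxA; set nu := mu *m _.
have nu_distr : is_distr nu.
  apply: distr_mulmx mu_distr; apply: stochastic_prod => i.
  rewrite mem_iota add0n => /andP[_ lt_i]; apply: stochastic_interp_grid.
  by rewrite -ltnS (leq_trans lt_i) ?leq_subr.
apply: le_trans (tv_triangle _ (nu *m P1 ^+ k) _) _; apply: lerD; first exact: mixing.
have window_close : l1norm (nu *m \big[mulmx/1%:M]_(i <- iota (T.+1 - k) k) G i
    - nu *m P1 ^+ k) <= k%:R * (2 * ((k%:R - 1) / T%:R)).
  have := l1norm_prod_sub_exp (r := iota (T.+1 - k) k) (F := G)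
    (d := 2 * ((k%:R - 1) / T%:R)) P1_stoch.
  have window_range i : i \in iota (T.+1 - k) k -> (i <= T)%N /\ (T.+1 <= i + k)%N.
    by rewrite mem_iota subnK // => /andP[le_i lt_i]; split; lia.
  rewrite size_iota; apply=> // i.
    by move=> /window_range[le_iT _]; apply: stochastic_interp_grid.
  by move=> mu' /window_range[le_iT le_Tik]; apply: interp_grid_sub_le.
rewrite -ler_pdivlMl ?invr_gt0 // invrK.
by apply: le_trans window_close _; rewrite mulrCA !mulrA.
Qed.

End AdiabaticProduct.

Section NatInf.
Variable R : realType.
Implicit Type S : nat -> Prop.

Lemma nat_inf_le S k (x : \bar R) : S k -> ((k%:R)%:E <= x)%E -> (nat_inf R S <= x)%E.
Proof. by move=> Sk; apply: le_trans; apply: ereal_inf_lbound; exists k. Qed.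

Lemma nat_inf_attained S : (exists k, S k) -> exists k, S k /\ nat_inf R S = (k%:R)%:E.
Proof.
move=> [k0 Sk0]; have exS : exists k, `[< S k >] by exists k0; apply/asboolP.
case: (ex_minnP exS) => k /asboolP Sk k_min; exists k; split => //.
apply/le_anti/andP; split; first exact: nat_inf_le Sk _.
by apply/ereal_infP => y [j Sj <-]; rewrite lee_fin ler_nat k_min //; apply/asboolP.
Qed.

Lemma nat_inf_empty S : ~ (exists k, S k) -> nat_inf R S = +oo%E.
Proof.
move=> noS; apply/le_anti/andP; split; first exact: leey.
by apply/ereal_infP => y [j Sj _]; case: noS; exists j.
Qed.

End NatInf.

Lemma adiabatic_window_le (R : realType) (eps : R) (k T : nat) :
  0 < eps < 2 -> 2 / eps * (k%:R * k%:R) < T%:R + 1 ->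
  (k <= T.+1)%N /\ k%:R * (k%:R - 1) / T%:R <= eps / 2.
Proof.
move=> /andP[eps_gt0 eps_lt2] window_lt.
have kk_lt : k%:R * k%:R < eps / 2 * (T%:R + 1).
  have -> : k%:R * k%:R = eps / 2 * (2 / eps * (k%:R * k%:R)) by field; rewrite gt_eqF.
  by rewrite ltr_pM2l ?divr_gt0.
split.
  suff : (k * k < T.+1)%N by nia.
  by rewrite -(ltr_nat R) natrM -natr1; nra.
have [->|T_gt0] := posnP T; first by rewrite invr0 mulr0 divr_ge0 // ltW.
rewrite ler_pdivrMr ?ltr0n //.
have [->|k_gt0] := posnP k; first by rewrite mul0r mulr_ge0 ?divr_ge0 // ltW.
have : 1 <= k%:R :> R by rewrite ler1n.
nra.
Qed.

Theorem proposition1 (R : realType) (n : nat) (P0 P1 : 'M[R]_n) (pi1 : 'rV[R]_n)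
  (hP0 : stochastic P0) (hP1 : stochastic P1)
  (hirr0 : irreducible P0) (hap0 : aperiodic P0)
  (hirr1 : irreducible P1) (hap1 : aperiodic P1)
  (hpi1 : stationary P1 pi1) (eps : R) (heps : 0 < eps) :
  (tad P0 P1 pi1 eps <=
     ((2 / eps)%:E * (tmix P1 pi1 (eps / 2) * tmix P1 pi1 (eps / 2))))%E.
Proof.
rewrite /tmix; set mixes := fun T => forall nu, _.
have [[k0 k0_mixes]|no_mix] := pselect (exists k, mixes k); last first.
  by rewrite nat_inf_empty // mulyy mulry gtr0_sg ?divr_gt0 // mul1e leey.
have [k [k_mixes ->]] := nat_inf_attained R (ex_intro _ k0 k0_mixes).
have pi1_distr : is_distr pi1 by case: hpi1.
have y_ge0 : 0 <= 2 / eps * (k%:R * k%:R) by rewrite mulr_ge0 ?divr_ge0 // ltW.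
rewrite /tad -!EFinM; have [eps_ge2|eps_lt2] := lerP 2 eps.
  apply: (nat_inf_le (k := 0)); last by rewrite lee_fin.
  move=> T _ _ nu nu_distr; apply: le_trans (tv_distr_le1 _ pi1_distr) _; last lra.
  exact/distr_mulmx/nu_distr/stochastic_adiab_prod.
have /andP[trunc_le lt_trunc] := truncn_itv y_ge0.
apply: (nat_inf_le (k := Num.truncn (2 / eps * (k%:R * k%:R)))); last by rewrite lee_fin trunc_le.
move=> T T_gt0 le_trunc nu nu_distr.
have [le_kT error_le] : (k <= T.+1)%N /\ k%:R * (k%:R - 1) / T%:R <= eps / 2.
  apply: adiabatic_window_le; first by rewrite heps.
  by apply: lt_le_trans lt_trunc _; rewrite -natr1 lerD2r ler_nat.
apply: le_trans (tv_adiab_prod_le hP0 hP1 k_mixes T_gt0 le_kT nu_distr) _; lra.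
Qed.
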